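(* Let $f\colon Y\to X$ be a generic map between path connected spaces, let $\dagger\in Y$ and write $*=f(\dagger)$. Then $f_*\colon\pi_1(Y,\dagger)\to\pi_1(X,* )$ is a split epimorphism. Consequently, the biset $B=B(f,\dagger,* )$ of $f$ is right-principal and left-invertible, namely $B^\vee\otimes_{\pi_1(Y,\dagger)}B\cong\pi_1(X,* )$ as $\pi_1(X,* )$-$\pi_1(X,* )$-bisets (the latter with actions by left and right multiplication).
   Context: A continuous map $f\colon Y\to X$ is generic if there exists a continuous map $g\colon X\to Y$ such that $f\circ g$ is isotopic to the identity of $X$. The biset $B(f,\dagger,* )$ is the set of homotopy classes rel endpoints of paths in $X$ from $f(\dagger)$ to $*$, a $\pi_1(Y,\dagger)$-$\pi_1(X,* )$-biset via $[\lambda]\cdot[\gamma]=[f\circ\lambda\#\gamma]$ and $[\gamma]\cdot[\mu]=[\gamma\#\mu]$. A biset is right-principal if the right action is simply transitive. The contragredient $B^\vee$ of an $H$-$G$-biset is the $G$-$H$-biset with the same set and actions $g\cdot\check b\cdot h=(h^{-1}bg^{-1})\check{}$; $\otimes_H$ denotes the product $B\times C/(bh,c)=(b,hc)$. *)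

From HB Require Import structures.
From mathcomp Require Import all_boot all_order all_algebra.
From mathcomp Require Import all_classical all_reals topology.
From mathcomp Require Import Rstruct Rstruct_topology.
Set Implicit Arguments. Unset Strict Implicit. Unset Printing Implicit Defensive.
Import Order.TTheory GRing.Theory Num.Theory.
Local Open Scope classical_set_scope.
Local Open Scope ring_scope.

Local Notation R := Rdefinitions.R.

Definition uI : set R := `[0, 1]%classic.

Definition is_path {X : topologicalType} (g : R -> X) (a b : X) : Prop :=
  {within uI, continuous g} /\ g 0 = a /\ g 1 = b.

Definition path_htpy {X : topologicalType} (g h : R -> X) : Prop :=
  exists H : R * R -> X,
    {within uI `*` uI, continuous H} /\
    (forall s, uI s -> H (s, 0) = g s /\ H (s, 1) = h s) /\
    (forall t, uI t -> H (0, t) = g 0 /\ H (1, t) = g 1).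

Definition hclass {X : topologicalType} (g : R -> X) : set (R -> X) :=
  [set h | path_htpy g h].

Definition pconcat {X : topologicalType} (g k : R -> X) : R -> X :=
  fun s => if s <= 2^-1 then g (2 * s) else k (2 * s - 1).
Definition prev {X : topologicalType} (g : R -> X) : R -> X :=
  fun s => g (1 - s).

Definition pclasses (X : topologicalType) (a b : X) : set (set (R -> X)) :=
  [set A | exists g, is_path g a b /\ A = hclass g].

Definition pi1 {X : topologicalType} (x : X) := pclasses x x.

Definition hmul {X : topologicalType} (A B : set (R -> X)) : set (R -> X) :=
  [set h | exists g k, A g /\ B k /\ path_htpy (pconcat g k) h].
Definition hinv {X : topologicalType} (A : set (R -> X)) : set (R -> X) :=
  [set h | exists g, A g /\ path_htpy (prev g) h].
Definition hpush {Y X : topologicalType} (f : Y -> X) (A : set (R -> Y))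
  : set (R -> X) := [set h | exists g, A g /\ path_htpy (f \o g) h].

Definition path_connected (X : topologicalType) : Prop :=
  forall a b : X, exists g : R -> X, is_path g a b.

Definition homeomorphism {X : topologicalType} (h : X -> X) : Prop :=
  exists k : X -> X, continuous h /\ continuous k /\ cancel h k /\ cancel k h.

Definition isotopic {X : topologicalType} (u v : X -> X) : Prop :=
  exists H : X * R -> X,
    {within [set: X] `*` uI, continuous H} /\
    (forall x, H (x, 0) = u x /\ H (x, 1) = v x) /\
    (forall t, uI t -> homeomorphism (fun x => H (x, t))).

Definition generic_map {Y X : topologicalType} (f : Y -> X) : Prop :=
  continuous f /\
  exists g : X -> Y, continuous g /\ isotopic (f \o g) idfun.

Definition split_epi_pi1 {Y X : topologicalType} (f : Y -> X) (y : Y) : Prop :=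
  exists s : set (R -> X) -> set (R -> Y),
    (forall A, pi1 (f y) A -> pi1 y (s A)) /\
    (forall A B, pi1 (f y) A -> pi1 (f y) B -> s (hmul A B) = hmul (s A) (s B)) /\
    (forall A, pi1 (f y) A -> hpush f (s A) = A).

(* carrier: pclasses X (f dag) star;
   left  pi1(Y,dag)-action: [lam].[gam] = [f o lam # gam];
   right pi1(X,star)-action: [gam].[mu] = [gam # mu] *)
Section Biset.
Context {Y X : topologicalType} (f : Y -> X) (dag : Y) (star : X).

Definition Bset := pclasses (f dag) star.
Definition Bl (L : set (R -> Y)) (G : set (R -> X)) := hmul (hpush f L) G.
Definition Br (G M : set (R -> X)) := hmul G M.

Definition right_principal : Prop :=
  (exists b, Bset b) /\
  forall b b', Bset b -> Bset b' ->
    exists! m, pi1 star m /\ Br b m = b'.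

(* B^v (x)_{pi1(Y,dag)} B: pairs (b^v, c) with b, c in B, modulo the
   equivalence relation generated by (b^v . h, c) ~ (b^v, h . c), where
   b^v . h = (h^-1 . b)^v *)
Definition tens_gen (x y : set (R -> X) * set (R -> X)) : Prop :=
  exists b c h, Bset b /\ Bset c /\ pi1 dag h /\
    x = (Bl (hinv h) b, c) /\ y = (b, Bl h c).

Definition tens_rel (x y : set (R -> X) * set (R -> X)) : Prop :=
  forall E : set (R -> X) * set (R -> X) -> set (R -> X) * set (R -> X) -> Prop,
    (forall z, E z z) -> (forall z w, E z w -> E w z) ->
    (forall z w u, E z w -> E w u -> E z u) ->
    (forall z w, tens_gen z w -> E z w) -> E x y.

Definition tens : set (set (set (R -> X) * set (R -> X))) :=
  [set C | exists x, Bset x.1 /\ Bset x.2 /\ C = [set y | tens_rel x y]].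

(* pi1(X,star)-pi1(X,star)-biset structure on the tensor product:
   g . (b^v (x) c) . g' = (b^v . ... ) with g . b^v = (b . g^-1)^v *)
Definition tens_act (g : set (R -> X)) (C : set (set (R -> X) * set (R -> X)))
  (g' : set (R -> X)) : set (set (R -> X) * set (R -> X)) :=
  [set y | exists x, C x /\ tens_rel (Br x.1 (hinv g), Br x.2 g') y].

Definition left_invertible : Prop :=
  exists phi : set (set (R -> X) * set (R -> X)) -> set (R -> X),
    (forall C, tens C -> pi1 star (phi C)) /\
    (forall C D, tens C -> tens D -> phi C = phi D -> C = D) /\
    (forall A, pi1 star A -> exists C, tens C /\ phi C = A) /\
    (forall C g g', tens C -> pi1 star g -> pi1 star g' ->
       phi (tens_act g C g') = hmul (hmul g (phi C)) g').
End Biset.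

(* If [H] is a homotopy from [f o g] to the identity, then on loops at [x] the
   map [(f o g)_*] is conjugation by the track [t |-> H (x, t)]: sweep the loop
   across the square [(s, t) |-> H (loop s, t)].  Conjugating by a path from
   [dag] to [g (f dag)] and by that track turns [g_*] into a homomorphic section
   of [f_*].  The biset [B(f, dag, f dag)] is [pi1(X, f dag)] acting on itself on
   the right, hence right-principal, and [b^v (x) c |-> b^-1 c] identifies
   [B^v (x) B] with [pi1(X, f dag)]: surjectivity of [f_*] moves any [b] to any
   [b'] across the tensor sign, which gives injectivity.  Classes of paths obey
   the groupoid laws by reparametrisation and straight-line homotopies in the
   unit square. *)

From HB Require Import structures.
From mathcomp Require Import all_boot all_order all_algebra.
From mathcomp Require Import all_classical all_reals topology normedtype.
From mathcomp Require Import Rstruct Rstruct_topology lra.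
Set Implicit Arguments. Unset Strict Implicit. Unset Printing Implicit Defensive.
Import Order.TTheory GRing.Theory Num.Theory.
Local Open Scope classical_set_scope.
Local Open Scope ring_scope.

Local Notation R := Rdefinitions.R.

Section WithinContinuity.
Context {T U V : topologicalType}.

Lemma continuous_within_comp (A : set T) (B : set U) (f : T -> U) (g : U -> V) :
  {within A, continuous f} -> (forall x, A x -> B (f x)) ->
  {within B, continuous g} -> {within A, continuous (g \o f)}.
Proof.
move=> /subspace_continuousP cf AB /subspace_continuousP cg.
apply/subspace_continuousP => x Ax W /(cg _ (AB x Ax)).
rewrite /= nbhs_simpl /within /= => gW.
have : \forall z \near x, A z -> B (f z) -> W (g (f z)) by exact: cf x Ax _ gW.
by apply: filterS => z gW' Az; exact: gW' Az (AB z Az).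
Qed.

Lemma continuous_within_cst (A : set T) (c : U) :
  {within A, continuous (fun _ : T => c)}.
Proof. exact/continuous_subspaceT/cst_continuous. Qed.

Lemma continuous_within_id (A : set T) : {within A, continuous id}.
Proof. by apply: continuous_subspaceT => x; exact: cvg_id. Qed.

Lemma continuous_within_pair (A : set T) (a : T -> U) (b : T -> V) :
  {within A, continuous a} -> {within A, continuous b} ->
  {within A, continuous (fun x => (a x, b x))}.
Proof. by move=> ca cb x; apply: cvg_pair; [exact: ca | exact: cb]. Qed.

Lemma eq_continuous_within (A : set T) (f g : T -> U) :
  (forall x, A x -> f x = g x) ->
  {within A, continuous f} -> {within A, continuous g}.
Proof. by move=> e; apply: subspace_eq_continuous => x /set_mem; exact: e. Qed.

Lemma continuous_within_split (A : set T) (phi : T -> R) (c : R) (f : T -> U) :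
  closed A -> continuous phi ->
  {within A `&` [set x | phi x <= c], continuous f} ->
  {within A `&` [set x | c <= phi x], continuous f} -> {within A, continuous f}.
Proof.
move=> cA cphi c1 c2.
have -> : A = A `&` [set x | phi x <= c] `|` A `&` [set x | c <= phi x].
  apply/seteqP; split=> [x Ax|x [] []//=].
  by case: (lerP (phi x) c) => h; [left | right; split => //=; rewrite ltW].
have closed_pre (S : set R) : closed S -> closed (phi @^-1` S).
  exact: (proj1 (continuous_closedP phi) cphi).
apply: withinU_continuous => //; apply: closedI => //.
  exact: closed_pre _ (@closed_le R c).
exact: closed_pre _ (@closed_ge R c).
Qed.

End WithinContinuity.
Arguments continuous_within_cst {T U} A c.
Arguments continuous_within_id {T} A.

Lemma continuous_within_fst {T U : topologicalType} (A : set (T * U)) :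
  {within A, continuous fst}.
Proof. by apply: continuous_subspaceT => x; exact: cvg_fst. Qed.

Lemma continuous_within_snd {T U : topologicalType} (A : set (T * U)) :
  {within A, continuous snd}.
Proof. by apply: continuous_subspaceT => x; exact: cvg_snd. Qed.

Arguments continuous_within_fst {T U} A.
Arguments continuous_within_snd {T U} A.

Lemma continuous_within_comp_fst {T U V : topologicalType} (A : set T) (B : set U)
  (h : T -> V) : {within A, continuous h} -> {within A `*` B, continuous (h \o fst)}.
Proof.
by move=> ch; apply: (continuous_within_comp _ _ ch) => [|? []//]; exact: continuous_within_fst.
Qed.

Lemma continuous_within_swap {T U : topologicalType} (A : set (T * U)) :
  {within A, continuous (fun p : T * U => (p.2, p.1))}.
Proof. exact: continuous_within_pair (continuous_within_snd _) (continuous_within_fst _). Qed.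

Section WithinArithmetic.
Context {T : topologicalType} (A : set T).
Implicit Types a b : T -> R.

Lemma continuous_withinD a b : {within A, continuous a} ->
  {within A, continuous b} -> {within A, continuous (fun x => a x + b x)}.
Proof. move=> ca cb x; exact: (@continuousD _ R^o (subspace A) a b x (ca x) (cb x)). Qed.

Lemma continuous_withinM a b : {within A, continuous a} ->
  {within A, continuous b} -> {within A, continuous (fun x => a x * b x)}.
Proof. move=> ca cb x; exact: (@continuousM _ (subspace A) a b x (ca x) (cb x)). Qed.

Lemma continuous_withinB a b : {within A, continuous a} ->
  {within A, continuous b} -> {within A, continuous (fun x => a x - b x)}.
Proof.
move=> ca cb; apply: continuous_withinD => //.
have := continuous_withinM (continuous_within_cst A (-1 : R)) cb.
by apply: eq_continuous_within => x _; rewrite mulN1r.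
Qed.

Lemma continuous_within_max a b : {within A, continuous a} ->
  {within A, continuous b} -> {within A, continuous (fun x => Num.max (a x) (b x))}.
Proof. move=> ca cb x; exact: (@continuous_max R (subspace A) a b x (ca x) (cb x)). Qed.

Lemma continuous_within_min a b : {within A, continuous a} ->
  {within A, continuous b} -> {within A, continuous (fun x => Num.min (a x) (b x))}.
Proof. move=> ca cb x; exact: (@continuous_min R (subspace A) a b x (ca x) (cb x)). Qed.

End WithinArithmetic.

Lemma in_uI (s : R) : uI s <-> 0 <= s <= 1.
Proof. by rewrite /uI /= in_itv. Qed.

Lemma uI0 : uI 0. Proof. by apply/in_uI; lra. Qed.
Lemma uI1 : uI 1. Proof. by apply/in_uI; lra. Qed.

Lemma in_uIX (p : R * R) : (uI `*` uI) p <-> 0 <= p.1 <= 1 /\ 0 <= p.2 <= 1.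
Proof. by split=> -[/in_uI ? /in_uI ?]; split; apply/in_uI. Qed.

Lemma closed_uI : closed uI.
Proof.
have -> : uI = [set x : R | 0 <= x] `&` [set x | x <= 1].
  by apply/seteqP; split => x; rewrite /uI /= in_itv /= => /andP.
by apply: closedI; [exact: closed_ge | exact: closed_le].
Qed.

Lemma closed_uIX : closed (uI `*` uI).
Proof.
have closed_pre (pr : R * R -> R) : continuous pr -> closed (pr @^-1` uI).
  by move=> cpr; exact: (proj1 (continuous_closedP _) cpr _ closed_uI).
apply: (closedI (closed_pre fst _) (closed_pre snd _)) => x.
  exact: cvg_fst.
exact: cvg_snd.
Qed.

Ltac no_maxmin t :=
  match t with
  | context [Order.max _ _] => fail 1
  | context [Order.min _ _] => fail 1
  | _ => idtac
  end.

(* [lra] chokes on equations between points of a space, hence the clearing. *)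
Ltac real_lra :=
  repeat match goal with
  | H : @eq ?T _ _ |- _ => assert_fails (unify T R); clear H
  end;
  lazymatch goal with
  | |- @eq ?T _ _ => unify T R; lra
  | |- False => lra
  end.

(* Case splits innermost first, so that every piece is linear for [lra]. *)
Ltac piecewise_lra :=
  repeat match goal with
  | |- context [Order.max ?a ?b] => no_maxmin a; no_maxmin b; case: (leP a b) => ?
  | |- context [Order.min ?a ?b] => no_maxmin a; no_maxmin b; case: (leP a b) => ?
  | |- context [?a <= ?b] => case: (leP a b) => ?; cbv beta iota
  end;
  try solve [exfalso; real_lra | f_equal; real_lra].

Section PathHomotopy.
Context {X : topologicalType}.
Implicit Types (g h k : R -> X) (F G : R * R -> X).

Lemma pconcat0 g k : pconcat g k 0 = g 0.
Proof. by rewrite /pconcat mulr0 ifT //; lra. Qed.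

Lemma pconcat1 g k : pconcat g k 1 = k 1.
Proof. by rewrite /pconcat; case: ifP => h; [exfalso; lra | congr k; lra]. Qed.

Lemma pconcat_in2 (P : X -> X -> Prop) g k g' k' :
  (forall s, uI s -> P (g s) (g' s)) -> (forall s, uI s -> P (k s) (k' s)) ->
  forall s, uI s -> P (pconcat g k s) (pconcat g' k' s).
Proof.
move=> Pg Pk s /in_uI s01; rewrite /pconcat; case: ifP => s2.
  by apply: Pg; apply/in_uI; lra.
by apply: Pk; apply/in_uI; move/negbT: s2; rewrite -ltNge; lra.
Qed.

Definition hconcat F G (p : R * R) : X :=
  pconcat (fun s => F (s, p.2)) (fun s => G (s, p.2)) p.1.

Lemma hconcat_continuous F G :
  {within uI `*` uI, continuous F} -> {within uI `*` uI, continuous G} ->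
  (forall t, uI t -> F (1, t) = G (0, t)) ->
  {within uI `*` uI, continuous (hconcat F G)}.
Proof.
move=> cF cG FG; rewrite /hconcat /pconcat.
apply: (@continuous_within_split _ _ _ fst 2^-1).
- exact: closed_uIX.
- by move=> ?; exact: cvg_fst.
- apply: (@eq_continuous_within _ _ _ (F \o fun p => (2 * p.1, p.2))).
    by move=> [s t] [_ /= ->].
  apply: (continuous_within_comp _ _ cF).
    apply: continuous_within_pair (continuous_within_snd _).
    exact: continuous_withinM (continuous_within_cst _ _) (continuous_within_fst _).
  by move=> [s t] /= [[/in_uI ? /in_uI ?] ?]; split; apply/in_uI => /=; lra.
- apply: (@eq_continuous_within _ _ _ (G \o fun p => (2 * p.1 - 1, p.2))).
    move=> [s t] /= [[/in_uI ? /in_uI ut] s2]; case: ifP => // s2'.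
    have -> : s = 2^-1 by lra.
    have -> : (2 / 2 : R) = 1 by lra.
    by rewrite /= subrr FG //; apply/in_uI.
  apply: (continuous_within_comp _ _ cG).
    apply: continuous_within_pair (continuous_within_snd _).
    apply: continuous_withinB (continuous_within_cst _ _).
    exact: continuous_withinM (continuous_within_cst _ _) (continuous_within_fst _).
  by move=> [s t] /= [[/in_uI ? /in_uI ?] ?]; split; apply/in_uI => /=; lra.
Qed.

Lemma pconcat_continuous g k :
  {within uI, continuous g} -> {within uI, continuous k} -> g 1 = k 0 ->
  {within uI, continuous (pconcat g k)}.
Proof.
move=> cg ck gk.
change (pconcat g k) with (hconcat (g \o fst) (k \o fst) \o fun s => (s, 0)).
apply: (continuous_within_comp _ _ (hconcat_continuous
  (continuous_within_comp_fst (B := uI) cg) (continuous_within_comp_fst (B := uI) ck) _)) => //.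
- exact: continuous_within_pair (continuous_within_id _) (continuous_within_cst _ _).
- by move=> s us; split => //; exact: uI0.
Qed.

Lemma path_htpy_ends g h : path_htpy g h -> h 0 = g 0 /\ h 1 = g 1.
Proof.
move=> [H [_ [Hs Ht]]].
have [_ <-] := Hs 0 uI0; have [_ <-] := Hs 1 uI1.
by case: (Ht 1 uI1) => -> ->.
Qed.

Lemma path_htpy_refl g : {within uI, continuous g} -> path_htpy g g.
Proof.
by move=> cg; exists (g \o fst); split => //; exact: continuous_within_comp_fst.
Qed.

Lemma path_htpy_sym g h : path_htpy g h -> path_htpy h g.
Proof.
move=> gh; have [e0 e1] := path_htpy_ends gh; move: gh => [H [cH [Hs Ht]]].
exists (fun p => H (p.1, 1 - p.2)); split; last split.
- apply: (continuous_within_comp _ _ cH).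
    apply: continuous_within_pair (continuous_within_fst _) _.
    exact: continuous_withinB (continuous_within_cst _ _) (continuous_within_snd _).
  by move=> p /in_uIX ?; split; apply/in_uI => /=; lra.
- by move=> s us; rewrite /= subr0 subrr; case: (Hs s us).
- by move=> t /in_uI ut; rewrite /= e0 e1; apply: Ht; apply/in_uI; lra.
Qed.

Lemma eq_path_htpyl g g' h : (forall s, uI s -> g s = g' s) ->
  path_htpy g h -> path_htpy g' h.
Proof.
move=> e [H [cH [Hs Ht]]]; exists H; split => //; split.
  by move=> s us; rewrite -e //; exact: Hs.
by move=> t ut; rewrite -!e //; [exact: Ht | exact: uI1 | exact: uI0].
Qed.

Lemma eq_path_htpyr g h h' : (forall s, uI s -> h s = h' s) ->
  path_htpy g h -> path_htpy g h'.
Proof.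
move=> e [H [cH [Hs Ht]]]; exists H; split => //; split => //.
by move=> s us; rewrite -e //; exact: Hs.
Qed.

Lemma path_htpy_trans g h k : path_htpy g h -> path_htpy h k -> path_htpy g k.
Proof.
move=> gh hk; have [e0 e1] := path_htpy_ends gh.
move: gh hk => [H1 [c1 [Hs1 Ht1]]] [H2 [c2 [Hs2 Ht2]]].
pose swap (p : R * R) := (p.2, p.1).
have swapI p : (uI `*` uI) p -> (uI `*` uI) (swap p) by case.
exists (hconcat (H1 \o swap) (H2 \o swap) \o swap); split; last split.
- have cswap := continuous_within_swap (A := uI `*` uI).
  apply: (continuous_within_comp cswap swapI).
  apply: hconcat_continuous.
  + exact: continuous_within_comp cswap swapI c1.
  + exact: continuous_within_comp cswap swapI c2.
  + by move=> t ut /=; case: (Hs1 t ut) => _ ->; case: (Hs2 t ut).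
- move=> s us; rewrite /hconcat /= pconcat0 pconcat1 /=.
  by case: (Hs1 s us) => -> _; case: (Hs2 s us).
- move=> t ut; rewrite /hconcat /=.
  have at_end (x : X) (i : R) : (forall r, uI r -> H1 (i, r) = x) ->
      (forall r, uI r -> H2 (i, r) = x) ->
      pconcat (fun r => H1 (i, r)) (fun r => H2 (i, r)) t = x.
    by move=> h1 h2; exact: (pconcat_in2 (P := fun y (_ : X) => y = x) h1 h2 ut).
  split; apply: at_end => r ur.
  + by case: (Ht1 r ur).
  + by rewrite -e0; case: (Ht2 r ur).
  + by case: (Ht1 r ur).
  + by rewrite -e1; case: (Ht2 r ur).
Qed.

End PathHomotopy.

Lemma comp_pconcat {X Y : topologicalType} (f : X -> Y) (g k : R -> X) :
  f \o pconcat g k = pconcat (f \o g) (f \o k).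
Proof. by apply: funext => s; rewrite /pconcat /=; case: ifP. Qed.

Definition lerp (a b t : R) := (1 - t) * a + t * b.

Lemma lerp0 a b : lerp a b 0 = a. Proof. by rewrite /lerp; lra. Qed.
Lemma lerp1 a b : lerp a b 1 = b. Proof. by rewrite /lerp; lra. Qed.
Lemma lerpxx a t : lerp a a t = a. Proof. by rewrite /lerp; lra. Qed.

Lemma lerp_uI a b t : uI a -> uI b -> uI t -> uI (lerp a b t).
Proof.
move=> /in_uI/andP[? ?] /in_uI/andP[? ?] /in_uI/andP[? ?].
by apply/in_uI/andP; split; rewrite /lerp; nra.
Qed.

Lemma continuous_within_lerp (A : set (R * R)) (a b : R * R -> R) :
  {within A, continuous a} -> {within A, continuous b} ->
  {within A, continuous (fun z => lerp (a z) (b z) z.2)}.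
Proof.
move=> ca cb; have csnd := continuous_within_snd A.
apply: continuous_withinD; apply: continuous_withinM => //.
exact: continuous_withinB (continuous_within_cst _ _) csnd.
Qed.

Section PathHomotopyLaws.
Context {X : topologicalType}.
Implicit Types (g h k l : R -> X).

(* Straight-line homotopy: the square is convex. *)
Lemma path_htpy_square (F : R * R -> X) (p q : R -> R * R) :
  {within uI `*` uI, continuous F} ->
  {within uI, continuous p} -> {within uI, continuous q} ->
  (forall s, uI s -> (uI `*` uI) (p s)) -> (forall s, uI s -> (uI `*` uI) (q s)) ->
  p 0 = q 0 -> p 1 = q 1 -> path_htpy (F \o p) (F \o q).
Proof.
move=> cF cp cq pI qI e0 e1.
have ccoord (r : R -> R * R) (pr : R * R -> R) : {within uI, continuous r} ->
    continuous pr -> {within uI `*` uI, continuous (fun z : R * R => pr (r z.1))}.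
  move=> cr cpr; have := continuous_within_comp (continuous_within_comp_fst (B := uI) cr)
    (B := setT) (fun _ _ => I) (continuous_subspaceT (A := setT) cpr).
  exact.
have cfst : continuous (@fst R R) by move=> ?; exact: cvg_fst.
have csnd : continuous (@snd R R) by move=> ?; exact: cvg_snd.
exists (fun z => F (lerp (p z.1).1 (q z.1).1 z.2, lerp (p z.1).2 (q z.1).2 z.2)).
split; last split.
- apply: (continuous_within_comp _ _ cF).
    by apply: continuous_within_pair; apply: continuous_within_lerp; apply: ccoord.
  move=> [s t] /= [us ut].
  by have [? ?] := pI s us; have [? ?] := qI s us; split; apply: lerp_uI.
- by move=> s _ /=; rewrite !lerp0 !lerp1; case: (p s); case: (q s).
- by move=> t _ /=; rewrite -e0 -e1 !lerpxx; case: (p 0); case: (p 1).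
Qed.

Lemma path_htpy_reparam2 g (phi psi : R -> R) : {within uI, continuous g} ->
  {within uI, continuous phi} -> {within uI, continuous psi} ->
  (forall s, uI s -> uI (phi s)) -> (forall s, uI s -> uI (psi s)) ->
  phi 0 = psi 0 -> phi 1 = psi 1 -> path_htpy (g \o phi) (g \o psi).
Proof.
move=> cg cphi cpsi phiI psiI e0 e1.
have c0 := continuous_within_cst uI (0 : R).
apply: (@path_htpy_square (g \o fst) (fun s => (phi s, 0)) (fun s => (psi s, 0))).
- exact: continuous_within_comp_fst.
- exact: continuous_within_pair.
- exact: continuous_within_pair.
- by move=> s us; split; [exact: phiI | exact: uI0].
- by move=> s us; split; [exact: psiI | exact: uI0].
- by rewrite e0.
- by rewrite e1.
Qed.

Lemma path_htpy_reparam g (phi : R -> R) : {within uI, continuous g} ->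
  {within uI, continuous phi} -> (forall s, uI s -> uI (phi s)) ->
  phi 0 = 0 -> phi 1 = 1 -> path_htpy (g \o phi) g.
Proof.
move=> cg cphi phiI e0 e1.
exact: path_htpy_reparam2 cg cphi (continuous_within_id _) phiI (fun _ => id) e0 e1.
Qed.

Lemma prev_continuous g : {within uI, continuous g} -> {within uI, continuous (prev g)}.
Proof.
move=> cg; apply: (continuous_within_comp _ _ cg).
  exact: continuous_withinB (continuous_within_cst _ _) (continuous_within_id _).
by move=> s /in_uI ?; apply/in_uI; lra.
Qed.

Lemma comp_continuous {Y : topologicalType} (f : X -> Y) g : continuous f ->
  {within uI, continuous g} -> {within uI, continuous (f \o g)}.
Proof.
move=> cf cg.
exact: continuous_within_comp cg (fun _ _ => I) (continuous_subspaceT (A := setT) cf).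
Qed.

Lemma pconcat_htpy g g' k k' : path_htpy g g' -> path_htpy k k' -> g 1 = k 0 ->
  path_htpy (pconcat g k) (pconcat g' k').
Proof.
move=> [H1 [c1 [Hs1 Ht1]]] [H2 [c2 [Hs2 Ht2]]] gk.
exists (hconcat H1 H2); split; last split.
- apply: hconcat_continuous => // t ut.
  by case: (Ht1 t ut) => _ ->; case: (Ht2 t ut) => -> _.
- move=> s us; rewrite /hconcat /=; split; apply: (pconcat_in2 (P := eq)) => // r ur;
    by [case: (Hs1 r ur) | case: (Hs2 r ur)].
- move=> t ut; rewrite /hconcat /= !pconcat0 !pconcat1.
  by case: (Ht1 t ut) => -> _; case: (Ht2 t ut) => _ ->.
Qed.

Lemma prev_htpy g g' : path_htpy g g' -> path_htpy (prev g) (prev g').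
Proof.
move=> [H [cH [Hs Ht]]].
exists (fun p => H (1 - p.1, p.2)); split; last split.
- apply: (continuous_within_comp _ _ cH).
    apply: continuous_within_pair (continuous_within_snd _).
    exact: continuous_withinB (continuous_within_cst _ _) (continuous_within_fst _).
  by move=> [a b] /= [/in_uI ? ?]; split => //=; apply/in_uI; lra.
- by move=> s /in_uI ?; apply: Hs; apply/in_uI => /=; lra.
- by move=> t ut; rewrite /prev /= subr0 subrr; case: (Ht t ut).
Qed.

Lemma comp_htpy {Y : topologicalType} (f : X -> Y) g g' : continuous f ->
  path_htpy g g' -> path_htpy (f \o g) (f \o g').
Proof.
move=> cf [H [cH [Hs Ht]]]; exists (f \o H); split; last split.
- exact: continuous_within_comp cH (fun _ _ => I) (continuous_subspaceT (A := setT) cf).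
- by move=> s us /=; case: (Hs s us) => -> ->.
- by move=> t ut /=; case: (Ht t ut) => -> ->.
Qed.

Lemma pconcatA g k l : {within uI, continuous g} -> {within uI, continuous k} ->
  {within uI, continuous l} -> g 1 = k 0 -> k 1 = l 0 ->
  path_htpy (pconcat (pconcat g k) l) (pconcat g (pconcat k l)).
Proof.
move=> cg ck cl gk kl.
have cgkl : {within uI, continuous (pconcat (pconcat g k) l)}.
  by apply: pconcat_continuous (pconcat_continuous _ _ _) _ _; rewrite ?pconcat1.
apply: path_htpy_sym; apply: (eq_path_htpyl _ (path_htpy_reparam
  (phi := fun s => Num.max (s / 2) (Num.max (s - 4^-1) (2 * s - 1))) cgkl _ _ _ _)).
- by move=> s /in_uI/andP[? ?]; rewrite /= /pconcat; piecewise_lra.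
- apply: continuous_within_max.
    exact: continuous_withinM (continuous_within_id _) (continuous_within_cst _ _).
  apply: continuous_within_max.
    exact: continuous_withinB (continuous_within_id _) (continuous_within_cst _ _).
  apply: continuous_withinB (continuous_within_cst _ _).
  exact: continuous_withinM (continuous_within_cst _ _) (continuous_within_id _).
- by move=> s /in_uI/andP[? ?]; apply/in_uI/andP; piecewise_lra.
- by piecewise_lra.
- by piecewise_lra.
Qed.

Lemma pconcat_cstl g : {within uI, continuous g} ->
  path_htpy (pconcat (fun _ => g 0) g) g.
Proof.
move=> cg; apply: (eq_path_htpyl _ (path_htpy_reparam
  (phi := fun s => Num.max 0 (2 * s - 1)) cg _ _ _ _)).
- by move=> s /in_uI/andP[? ?]; rewrite /= /pconcat; piecewise_lra.
- apply: continuous_within_max (continuous_within_cst _ _) _.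
  apply: continuous_withinB (continuous_within_cst _ _).
  exact: continuous_withinM (continuous_within_cst _ _) (continuous_within_id _).
- by move=> s /in_uI/andP[? ?]; apply/in_uI/andP; piecewise_lra.
- by piecewise_lra.
- by piecewise_lra.
Qed.

Lemma pconcat_cstr g : {within uI, continuous g} ->
  path_htpy (pconcat g (fun _ => g 1)) g.
Proof.
move=> cg; apply: (eq_path_htpyl _ (path_htpy_reparam
  (phi := fun s => Num.min 1 (2 * s)) cg _ _ _ _)).
- by move=> s /in_uI/andP[? ?]; rewrite /= /pconcat; piecewise_lra.
- apply: continuous_within_min (continuous_within_cst _ _) _.
  exact: continuous_withinM (continuous_within_cst _ _) (continuous_within_id _).
- by move=> s /in_uI/andP[? ?]; apply/in_uI/andP; piecewise_lra.
- by piecewise_lra.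
- by piecewise_lra.
Qed.

Lemma pconcat_prev g : {within uI, continuous g} ->
  path_htpy (pconcat g (prev g)) (fun _ => g 0).
Proof.
move=> cg; apply: (eq_path_htpyl _ (eq_path_htpyr _ (path_htpy_reparam2
  (phi := fun s => Num.min (2 * s) (2 - 2 * s)) (psi := fun _ => 0) cg _ _ _ _ _ _))).
- by move=> s /in_uI/andP[? ?]; rewrite /= /pconcat /prev; piecewise_lra.
- by [].
- apply: continuous_within_min.
    exact: continuous_withinM (continuous_within_cst _ _) (continuous_within_id _).
  apply: continuous_withinB (continuous_within_cst _ _) _.
  exact: continuous_withinM (continuous_within_cst _ _) (continuous_within_id _).
- exact: continuous_within_cst.
- by move=> s /in_uI/andP[? ?]; apply/in_uI/andP; piecewise_lra.
- by move=> *; exact: uI0.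
- by piecewise_lra.
- by piecewise_lra.
Qed.

Lemma prev_pconcat g : {within uI, continuous g} ->
  path_htpy (pconcat (prev g) g) (fun _ => g 1).
Proof.
move=> cg; apply: (eq_path_htpyl _ (eq_path_htpyr _ (path_htpy_reparam2
  (phi := fun s => Num.max (1 - 2 * s) (2 * s - 1)) (psi := fun _ => 1) cg _ _ _ _ _ _))).
- by move=> s /in_uI/andP[? ?]; rewrite /= /pconcat /prev; piecewise_lra.
- by [].
- apply: continuous_within_max.
    apply: continuous_withinB (continuous_within_cst _ _) _.
    exact: continuous_withinM (continuous_within_cst _ _) (continuous_within_id _).
  apply: continuous_withinB (continuous_within_cst _ _).
  exact: continuous_withinM (continuous_within_cst _ _) (continuous_within_id _).
- exact: continuous_within_cst.
- by move=> s /in_uI/andP[? ?]; apply/in_uI/andP; piecewise_lra.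
- by move=> *; exact: uI1.
- by piecewise_lra.
- by piecewise_lra.
Qed.

Lemma path_htpy_square_boundary (F : R * R -> X) :
  {within uI `*` uI, continuous F} ->
  path_htpy (fun s => F (s, 0))
    (pconcat (pconcat (fun t => F (0, t)) (fun s => F (s, 1))) (prev (fun t => F (1, t)))).
Proof.
move=> cF.
pose left (t : R) := (0 : R, t); pose top (s : R) := (s, 1 : R).
pose right (t : R) := (1 : R, 1 - t).
have in_left t : uI t -> (uI `*` uI) (left t) by split => //; exact: uI0.
have in_top s : uI s -> (uI `*` uI) (top s) by split => //; exact: uI1.
have in_right t : uI t -> (uI `*` uI) (right t).
  by move=> /in_uI ?; split; [exact: uI1 | apply/in_uI; rewrite /right /=; lra].
have -> : pconcat (pconcat (fun t => F (0, t)) (fun s => F (s, 1))) (prev (fun t => F (1, t)))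
    = F \o pconcat (pconcat left top) right by rewrite !comp_pconcat.
apply: (@path_htpy_square F (fun s => (s, 0)) _ cF).
- exact: continuous_within_pair (continuous_within_id _) (continuous_within_cst _ _).
- apply: pconcat_continuous; last by rewrite pconcat1 /top /right subr0.
    apply: pconcat_continuous => //.
      exact: continuous_within_pair (continuous_within_cst _ _) (continuous_within_id _).
    exact: continuous_within_pair (continuous_within_id _) (continuous_within_cst _ _).
  apply: continuous_within_pair (continuous_within_cst _ _) _.
  exact: continuous_withinB (continuous_within_cst _ _) (continuous_within_id _).
- by move=> s us; split => //; exact: uI0.
- pose inI (p _ : R * R) := (uI `*` uI) p.
  exact: (pconcat_in2 (P := inI) (pconcat_in2 (P := inI) in_left in_top (g' := left)
    (k' := top)) in_right (k' := right)).
- by rewrite pconcat0 pconcat0.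
- by rewrite pconcat1 /right subrr.
Qed.

End PathHomotopyLaws.

Definition hone {X : topologicalType} (a : X) : set (R -> X) := hclass (fun _ => a).

Section PathClasses.
Context {X : topologicalType}.
Implicit Types (a b c d : X) (g k l : R -> X) (A B C : set (R -> X)).

Lemma hclass_eq g k : path_htpy g k -> hclass g = hclass k.
Proof.
move=> gk; apply/seteqP; split => h /=; last exact: path_htpy_trans.
exact: path_htpy_trans (path_htpy_sym gk).
Qed.

Lemma is_path_pconcat g k a b c :
  is_path g a b -> is_path k b c -> is_path (pconcat g k) a c.
Proof.
move=> [cg [g0 g1]] [ck [k0 k1]]; split; last by rewrite pconcat0 pconcat1.
by apply: pconcat_continuous; rewrite ?g1 ?k0.
Qed.

Lemma is_path_prev g a b : is_path g a b -> is_path (prev g) b a.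
Proof.
move=> [cg [g0 g1]]; split; first exact: prev_continuous.
by rewrite /prev subr0 subrr.
Qed.

Lemma is_path_comp {Y : topologicalType} (f : X -> Y) g a b : continuous f ->
  is_path g a b -> is_path (f \o g) (f a) (f b).
Proof.
move=> cf [cg [g0 g1]]; split; first exact: comp_continuous.
by rewrite /= g0 g1.
Qed.

Lemma is_path_cst a : is_path (fun _ => a) a a.
Proof. by split => //; exact: continuous_within_cst. Qed.

Lemma hmul_hclass g k a b c : is_path g a b -> is_path k b c ->
  hmul (hclass g) (hclass k) = hclass (pconcat g k).
Proof.
move=> [cg [_ g1]] [ck [k0 _]]; apply/seteqP; split => h /=.
  move=> [g' [k' [gg [kk hh]]]]; apply: path_htpy_trans hh.
  by apply: pconcat_htpy; rewrite ?g1 ?k0.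
by move=> hh; exists g, k; split; [exact: path_htpy_refl | split => //; exact: path_htpy_refl].
Qed.

Lemma hinv_hclass g : {within uI, continuous g} -> hinv (hclass g) = hclass (prev g).
Proof.
move=> cg; apply/seteqP; split => h /=.
  by move=> [g' [gg hh]]; apply: path_htpy_trans hh; exact: prev_htpy.
by move=> hh; exists g; split => //; exact: path_htpy_refl.
Qed.

Lemma hpush_hclass {Y : topologicalType} (f : X -> Y) g : continuous f ->
  {within uI, continuous g} -> hpush f (hclass g) = hclass (f \o g).
Proof.
move=> cf cg; apply/seteqP; split => h /=.
  by move=> [g' [gg hh]]; apply: path_htpy_trans hh; exact: comp_htpy.
by move=> hh; exists g; split => //; exact: path_htpy_refl.
Qed.

Lemma pclassesM a b c A B : pclasses a b A -> pclasses b c B -> pclasses a c (hmul A B).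
Proof.
move=> [g [pg ->]] [k [pk ->]]; exists (pconcat g k).
by split; [exact: is_path_pconcat pg pk | exact: hmul_hclass pg pk].
Qed.

Lemma pclassesV a b A : pclasses a b A -> pclasses b a (hinv A).
Proof.
move=> [g [pg ->]]; exists (prev g); split; first exact: is_path_prev.
by rewrite hinv_hclass //; case: pg.
Qed.

Lemma pclasses1 a : pclasses a a (hone a).
Proof. by exists (fun _ => a); split => //; exact: is_path_cst. Qed.

Lemma pclasses_push {Y : topologicalType} (f : X -> Y) a b A : continuous f ->
  pclasses a b A -> pclasses (f a) (f b) (hpush f A).
Proof.
move=> cf [g [pg ->]]; exists (f \o g); split; first exact: is_path_comp.
by rewrite hpush_hclass //; case: pg.
Qed.

Lemma mulhA a b c d A B C : pclasses a b A -> pclasses b c B -> pclasses c d C ->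
  hmul (hmul A B) C = hmul A (hmul B C).
Proof.
move=> [g [pg ->]] [k [pk ->]] [l [pl ->]].
rewrite (hmul_hclass pg pk) (hmul_hclass (is_path_pconcat pg pk) pl).
rewrite (hmul_hclass pk pl) (hmul_hclass pg (is_path_pconcat pk pl)).
apply: hclass_eq; move: pg pk pl => [cg [_ g1]] [ck [k0 k1]] [cl [l0 _]].
by apply: pconcatA; rewrite ?g1 ?k0 ?k1 ?l0.
Qed.

Lemma mul1h a b A : pclasses a b A -> hmul (hone a) A = A.
Proof.
move=> [g [pg ->]]; rewrite (hmul_hclass (is_path_cst a) pg).
by apply: hclass_eq; case: pg => cg [<- _]; exact: pconcat_cstl.
Qed.

Lemma mulh1 a b A : pclasses a b A -> hmul A (hone b) = A.
Proof.
move=> [g [pg ->]]; rewrite (hmul_hclass pg (is_path_cst b)).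
by apply: hclass_eq; case: pg => cg [_ <-]; exact: pconcat_cstr.
Qed.

Lemma mulhV a b A : pclasses a b A -> hmul A (hinv A) = hone a.
Proof.
move=> [g [pg ->]]; have [cg [g0 _]] := pg.
rewrite hinv_hclass // (hmul_hclass pg (is_path_prev pg)) /hone -g0.
by apply: hclass_eq; exact: pconcat_prev.
Qed.

Lemma mulVh a b A : pclasses a b A -> hmul (hinv A) A = hone b.
Proof.
move=> [g [pg ->]]; have [cg [_ g1]] := pg.
rewrite hinv_hclass // (hmul_hclass (is_path_prev pg) pg) /hone -g1.
by apply: hclass_eq; exact: prev_pconcat.
Qed.

Lemma invhK a b A : pclasses a b A -> hinv (hinv A) = A.
Proof.
move=> [g [[cg _] ->]]; rewrite !hinv_hclass //; last exact: prev_continuous.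
by congr hclass; apply: funext => s; rewrite /prev opprB addrC subrK.
Qed.

Lemma invh1 a : hinv (hone a) = hone a.
Proof. by rewrite /hone hinv_hclass //; exact: continuous_within_cst. Qed.

Lemma mulKh a b c A B : pclasses a b A -> pclasses b c B -> hmul (hinv A) (hmul A B) = B.
Proof. by move=> pA pB; rewrite -(mulhA (pclassesV pA) pA pB) (mulVh pA) (mul1h pB). Qed.

Lemma mulKVh a b c A B : pclasses a b A -> pclasses a c B -> hmul A (hmul (hinv A) B) = B.
Proof. by move=> pA pB; rewrite -(mulhA pA (pclassesV pA) pB) (mulhV pA) (mul1h pB). Qed.

Lemma mulhKV a b c A B : pclasses a b A -> pclasses c b B -> hmul (hmul B (hinv A)) A = B.
Proof. by move=> pA pB; rewrite (mulhA pB (pclassesV pA) pA) (mulVh pA) (mulh1 pB). Qed.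

Lemma invMh a b c A B : pclasses a b A -> pclasses b c B ->
  hinv (hmul A B) = hmul (hinv B) (hinv A).
Proof.
move=> pA pB; have pAB := pclassesM pA pB.
have pBA := pclassesM (pclassesV pB) (pclassesV pA).
rewrite -(mulKh pAB pBA) (mulhA pA pB pBA) (mulKVh pB (pclassesV pA)) (mulhV pA).
by rewrite (mulh1 (pclassesV pAB)).
Qed.

End PathClasses.

Section Pushforward.
Context {X Y : topologicalType} (f : X -> Y).
Hypothesis cf : continuous f.
Implicit Types (a b c : X) (A B : set (R -> X)).

Lemma hpushM a b c A B : pclasses a b A -> pclasses b c B ->
  hpush f (hmul A B) = hmul (hpush f A) (hpush f B).
Proof.
move=> [g [pg ->]] [k [pk ->]].
have cgk := (is_path_pconcat pg pk).1.
rewrite (hmul_hclass pg pk) !hpush_hclass //; try by [case: pg | case: pk].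
by rewrite (hmul_hclass (is_path_comp cf pg) (is_path_comp cf pk)) comp_pconcat.
Qed.

Lemma hpushV a b A : pclasses a b A -> hpush f (hinv A) = hinv (hpush f A).
Proof.
move=> [g [[cg _] ->]].
rewrite hinv_hclass // !hpush_hclass //; last exact: prev_continuous.
by rewrite hinv_hclass //; exact: comp_continuous.
Qed.

Lemma hpush_comp {Z : topologicalType} (h : Y -> Z) a b A : continuous h ->
  pclasses a b A -> hpush h (hpush f A) = hpush (h \o f) A.
Proof.
move=> ch [g [[cg _] ->]]; rewrite !hpush_hclass //; last exact: comp_continuous.
by move=> x; apply: continuous_comp; [exact: cf | exact: ch].
Qed.

End Pushforward.

Definition hconj {X : topologicalType} (C A : set (R -> X)) := hmul (hmul C A) (hinv C).

Section Conjugation.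
Context {X : topologicalType}.
Implicit Types (a b c : X) (A B C D : set (R -> X)).

Lemma pclasses_conj a b C A : pclasses a b C -> pclasses b b A -> pclasses a a (hconj C A).
Proof. by move=> pC pA; exact: pclassesM (pclassesM pC pA) (pclassesV pC). Qed.

Lemma hconjM a b C A B : pclasses a b C -> pclasses b b A -> pclasses b b B ->
  hconj C (hmul A B) = hmul (hconj C A) (hconj C B).
Proof.
move=> pC pA pB; have pCi := pclassesV pC; rewrite /hconj.
rewrite (mulhA (pclassesM pC pA) pCi (pclassesM (pclassesM pC pB) pCi)).
rewrite -(mulhA pCi (pclassesM pC pB) pCi) -(mulhA pCi pC pB) (mulVh pC) (mul1h pB).
by rewrite -(mulhA (pclassesM pC pA) pB pCi) (mulhA pC pA pB).
Qed.

Lemma hconj_hmul a b c C D A : pclasses a b C -> pclasses b c D -> pclasses c c A ->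
  hconj C (hconj D A) = hconj (hmul C D) A.
Proof.
move=> pC pD pA; rewrite /hconj (invMh pC pD).
have pI := pclassesM (pclassesV pD) (pclassesV pC).
rewrite (mulhA pC (pclassesM (pclassesM pD pA) (pclassesV pD)) (pclassesV pC)).
rewrite (mulhA (pclassesM pD pA) (pclassesV pD) (pclassesV pC)) (mulhA pD pA pI).
by rewrite (mulhA (pclassesM pC pD) pA pI) (mulhA pC pD (pclassesM pA pI)).
Qed.

Lemma hconjK a b C A : pclasses a b C -> pclasses a a A -> hconj C (hconj (hinv C) A) = A.
Proof.
move=> pC pA; rewrite (hconj_hmul pC (pclassesV pC) pA) (mulhV pC) /hconj invh1.
by rewrite (mul1h pA) (mulh1 pA).
Qed.

Lemma hpush_conj {Y : topologicalType} (f : X -> Y) a b C A : continuous f ->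
  pclasses a b C -> pclasses b b A -> hpush f (hconj C A) = hconj (hpush f C) (hpush f A).
Proof.
move=> cf pC pA; rewrite /hconj (hpushM cf (pclassesM pC pA) (pclassesV pC)).
by rewrite (hpushM cf pC pA) (hpushV cf pC).
Qed.

End Conjugation.

Section HomotopyToIdentity.
Context {X : topologicalType} (u : X -> X) (H : X * R -> X).
Hypothesis cu : continuous u.
Hypothesis cH : {within [set: X] `*` uI, continuous H}.
Hypothesis H0 : forall x, H (x, 0) = u x.
Hypothesis H1 : forall x, H (x, 1) = x.

Definition track (x : X) : R -> X := fun t => H (x, t).

Lemma is_path_track x : is_path (track x) (u x) x.
Proof.
split; last by rewrite /track H0 H1.
have cx : {within uI, continuous (fun t : R => (x, t))}.
  exact: continuous_within_pair (continuous_within_cst _ _) (continuous_within_id _).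
exact: continuous_within_comp cx (fun t (ut : uI t) => conj I ut) cH.
Qed.

(* The homotopy sweeps [g] across the square [(s, t) |-> H (g s, t)]. *)
Lemma hpush_track a b A : pclasses a b A ->
  hpush u A = hmul (hmul (hclass (track a)) A) (hinv (hclass (track b))).
Proof.
move=> [g [pg ->]]; have [cg [g0 g1]] := pg.
have [pa pb] := (is_path_track a, is_path_track b).
rewrite hpush_hclass // hinv_hclass; last by case: pb.
rewrite (hmul_hclass pa pg) (hmul_hclass (is_path_pconcat pa pg) (is_path_prev pb)).
apply: hclass_eq.
pose F (z : R * R) := H (g z.1, z.2).
have cF : {within uI `*` uI, continuous F}.
  have cgz : {within uI `*` uI, continuous (fun z : R * R => (g z.1, z.2))}.
    exact: continuous_within_pair (continuous_within_comp_fst (B := uI) cg)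
      (continuous_within_snd _).
  exact: continuous_within_comp cgz (fun z (uz : (uI `*` uI) z) => conj I uz.2) cH.
have sq := path_htpy_square_boundary cF; rewrite /F /= g0 g1 in sq.
have Hg1 : (fun s => H (g s, 1)) = g by apply: funext => s; rewrite H1.
rewrite Hg1 in sq; apply: eq_path_htpyl sq => s _ /=.
by rewrite H0.
Qed.

Lemma hpush_track_loop a A : pclasses a a A -> hpush u A = hconj (hclass (track a)) A.
Proof. exact: hpush_track. Qed.

End HomotopyToIdentity.

(* The section is [A |-> [d] . g_*(B^-1 A B) . [d]^-1] with [B = [f o d # track]]
   for a path [d] from [dag] to [g (f dag)]: on loops, [(f o g)_*] is conjugation
   by the track (hpush_track_loop), which [B] undoes. *)
Lemma split_epi_pi1_htpy {Y X : topologicalType} (f : Y -> X) (g : X -> Y)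
    (H : X * R -> X) (dag : Y) :
  path_connected Y -> continuous f -> continuous g ->
  {within [set: X] `*` uI, continuous H} ->
  (forall x, H (x, 0) = f (g x)) -> (forall x, H (x, 1) = x) ->
  split_epi_pi1 f dag.
Proof.
move=> pcY cf cg cH H0 H1.
have cfg : continuous (f \o g) by move=> x; apply: continuous_comp; [exact: cg | exact: cf].
have [d pd] := pcY dag (g (f dag)).
have pD : pclasses dag (g (f dag)) (hclass d) by exists d.
have pT : pclasses (f (g (f dag))) (f dag) (hclass (track H (f dag))).
  by exists (track H (f dag)); split => //; exact: (is_path_track (u := f \o g) cH H0 H1).
set B := hmul (hpush f (hclass d)) (hclass (track H (f dag))).
have pB : pi1 (f dag) B := pclassesM (pclasses_push cf pD) pT.
pose s A := hconj (hclass d) (hpush g (hconj (hinv B) A)).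
have pBA A : pi1 (f dag) A -> pi1 (f dag) (hconj (hinv B) A).
  exact: pclasses_conj (pclassesV pB).
exists s; split; last split.
- by move=> A pA; apply: (pclasses_conj pD); apply: (pclasses_push cg); exact: pBA.
- move=> A A' pA pB'; rewrite /s (hconjM (pclassesV pB) pA pB').
  rewrite (hpushM cg (pBA _ pA) (pBA _ pB')).
  exact: hconjM pD (pclasses_push cg (pBA _ pA)) (pclasses_push cg (pBA _ pB')).
- move=> A pA; have pA' := pBA _ pA.
  rewrite /s (hpush_conj cf pD (pclasses_push cg pA')) (hpush_comp cg cf pA').
  rewrite (hpush_track_loop cfg cH H0 H1 pA') (hconj_hmul (pclasses_push cf pD) pT pA').
  exact: hconjK pB pA.
Qed.

Lemma right_principal_pclasses {Y X : topologicalType} (f : Y -> X) (dag : Y) (star : X) :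
  (exists b, pclasses (f dag) star b) -> right_principal f dag star.
Proof.
move=> nB; split => // b b' pb pb'; exists (hmul (hinv b) b'); split.
  by split; [exact: pclassesM (pclassesV pb) pb' | exact: (mulKVh pb pb')].
by move=> m [pm <-]; exact: (mulKh pb pm).
Qed.

Section LeftInvertible.
Context {Y X : topologicalType} (f : Y -> X) (dag : Y) (star : X).
Hypothesis cf : continuous f.
Hypothesis surj : forall A, pi1 (f dag) A -> exists L, pi1 dag L /\ hpush f L = A.

Local Notation B := (pclasses (f dag) star).
Local Notation "x ~ y" := (tens_rel f dag star x y) (at level 70).
Implicit Types (b c : set (R -> X)) (x y : set (R -> X) * set (R -> X)).

Definition pair_contract x := hmul (hinv x.1) x.2.

Definition tens_contract (C : set (set (R -> X) * set (R -> X))) : set (R -> X) :=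
  [set h | exists x, C x /\ pair_contract x h].

Lemma tens_rel_refl x : x ~ x.
Proof. by move=> E refl _ _ _; exact: refl. Qed.

Lemma tens_rel_sym x y : x ~ y -> y ~ x.
Proof. by move=> xy E refl sym trans gen; apply: (sym); exact: xy E refl sym trans gen. Qed.

Lemma tens_rel_trans x y z : x ~ y -> y ~ z -> x ~ z.
Proof.
move=> xy yz E refl sym trans gen.
by apply: (trans _ y); [exact: xy E refl sym trans gen | exact: yz E refl sym trans gen].
Qed.

Lemma tens_rel_gen x y : tens_gen f dag star x y -> x ~ y.
Proof. by move=> xy E _ _ _ gen; exact: gen xy. Qed.

(* The relation "equal, or both in [B x B] with the same contraction" is an
   equivalence containing the generators. *)
Lemma tens_rel_contract x y : x ~ y -> B x.1 -> B x.2 ->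
  [/\ B y.1, B y.2 & pair_contract y = pair_contract x].
Proof.
move=> xy b1 b2.
pose E x y := x = y \/ [/\ B x.1, B x.2, B y.1, B y.2 & pair_contract x = pair_contract y].
have : E x y.
  apply: xy.
  - by move=> z; left.
  - by move=> z w [->|[? ? ? ? e]]; [left | right].
  - move=> z w v [->|[? ? ? ? e1]] [<-|[? ? ? ? e2]]; try by [left | right].
    by right; split => //; rewrite e1 e2.
  move=> z w [b [c [h [pb [pc [ph [-> ->]]]]]]]; right => /=.
  have pP := pclasses_push cf ph.
  rewrite /Bl (hpushV cf ph); split => //.
  - exact: pclassesM (pclassesV pP) pb.
  - exact: pclassesM pP pc.
  - rewrite /pair_contract /= (invMh (pclassesV pP) pb) (invhK pP).
    exact: mulhA (pclassesV pb) pP pc.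
by case=> [<- | [_ _ ? ? ->]].
Qed.

Lemma tens_contract_class x : B x.1 -> B x.2 ->
  tens_contract [set y | x ~ y] = pair_contract x.
Proof.
move=> b1 b2; apply/seteqP; split => h /=.
  by move=> [y [xy hy]]; have [_ _ <-] := tens_rel_contract xy b1 b2.
by move=> hx; exists x; split => //; exact: tens_rel_refl.
Qed.

Lemma tens_rel_of_contract x y : B x.1 -> B x.2 -> B y.1 -> B y.2 ->
  pair_contract x = pair_contract y -> x ~ y.
Proof.
case: x y => [b c] [b' c'] /= pb pc pb' pc' e.
have [L [pL fL]] := surj (pclassesM pb' (pclassesV pb)).
apply: tens_rel_gen; exists b', c, L; do 3!split => //; split; congr pair.
  by rewrite /Bl (hpushV cf pL) fL (invMh pb' (pclassesV pb)) (invhK pb) (mulhKV pb' pb).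
rewrite /Bl fL (mulhA pb' (pclassesV pb) pc).
by rewrite /pair_contract /= in e; rewrite e (mulKVh pb' pc').
Qed.

Definition pair_act g x g' := (Br x.1 (hinv g), Br x.2 g').

Lemma pclasses_pair_act g x g' : B x.1 -> B x.2 -> pi1 star g -> pi1 star g' ->
  B (pair_act g x g').1 /\ B (pair_act g x g').2.
Proof.
by move=> p1 p2 pg pg'; split; [exact: pclassesM p1 (pclassesV pg) | exact: pclassesM p2 pg'].
Qed.

Lemma pair_contract_act g x g' : B x.1 -> B x.2 -> pi1 star g -> pi1 star g' ->
  pair_contract (pair_act g x g') = hmul (hmul g (pair_contract x)) g'.
Proof.
case: x => b c /= pb pc pg pg'.
rewrite /pair_contract /Br /= (invMh pb (pclassesV pg)) (invhK pg).
rewrite (mulhA pg (pclassesV pb) (pclassesM pc pg')).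
by rewrite (mulhA pg (pclassesM (pclassesV pb) pc) pg') (mulhA (pclassesV pb) pc pg').
Qed.

Lemma tens_act_class g x g' : B x.1 -> B x.2 -> pi1 star g -> pi1 star g' ->
  tens_act f dag star g [set y | x ~ y] g' = [set y | pair_act g x g' ~ y].
Proof.
move=> p1 p2 pg pg'; apply/seteqP; split => y /=; last first.
  by move=> xy; exists x; split => //; exact: tens_rel_refl.
move=> [z [xz zy]]; have [q1 q2 e] := tens_rel_contract xz p1 p2.
have [r1 r2] := pclasses_pair_act (x := x) p1 p2 pg pg'.
have [s1 s2] := pclasses_pair_act (x := z) q1 q2 pg pg'.
apply: tens_rel_trans zy; apply: tens_rel_of_contract => //.
by rewrite !pair_contract_act // e.
Qed.

Lemma left_invertible_pclasses : (exists b, B b) -> left_invertible f dag star.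
Proof.
move=> [b0 pb0]; exists tens_contract; split; last split; last split.
- move=> C [x [p1 [p2 ->]]]; rewrite tens_contract_class //.
  exact: pclassesM (pclassesV p1) p2.
- move=> C D [x [p1 [p2 ->]]] [y [q1 [q2 ->]]]; rewrite !tens_contract_class // => e.
  have xy := tens_rel_of_contract p1 p2 q1 q2 e.
  by apply/seteqP; split => z /=; apply: tens_rel_trans; [exact: tens_rel_sym | ].
- move=> A pA; have pbA := pclassesM pb0 pA.
  exists [set y | (b0, hmul b0 A) ~ y]; split; first by exists (b0, hmul b0 A).
  by rewrite tens_contract_class // /pair_contract /= (mulKh pb0 pA).
- move=> C g g' [x [p1 [p2 ->]]] pg pg'.
  have [r1 r2] := pclasses_pair_act (x := x) p1 p2 pg pg'.
  rewrite tens_act_class // !tens_contract_class //; exact: pair_contract_act.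
Qed.

End LeftInvertible.

Theorem mainTheorem20 (Y X : topologicalType) (f : Y -> X) (dag : Y) :
  path_connected Y -> path_connected X -> generic_map f ->
  split_epi_pi1 f dag /\
  right_principal f dag (f dag) /\ left_invertible f dag (f dag).
Proof.
move=> pcY _ [cf [g [cg [H [cH [Hfg _]]]]]].
have sp : split_epi_pi1 f dag.
  by apply: (split_epi_pi1_htpy dag pcY cf cg cH) => x; case: (Hfg x).
have nB : exists b, pi1 (f dag) b by exists (hone (f dag)); exact: pclasses1.
split=> //; split; first exact: right_principal_pclasses.
have [s [ps [_ fs]]] := sp.
apply: (left_invertible_pclasses cf _ nB) => A pA.
by exists (s A); split; [exact: ps | exact: fs].
Qed.
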